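(* Let $p$ be a prime number and let $H$ be a $p\times p$ circulant complex Hadamard matrix all of whose entries are $p$-th roots of unity (i.e. $H\in C^{circ}_p(p)$). Then $H$ is equivalent to the Fourier matrix $F_p=(w^{ij})_{i,j=0}^{p-1}$, $w=e^{2\pi i/p}$.
   Context: A complex Hadamard matrix of order $n$ is a matrix $H\in M_n(\mathbb C)$ with $|H_{ij}|=1$ for all $i,j$ and pairwise orthogonal rows (equivalently $H/\sqrt n$ is unitary). A matrix $H=(H_{ij})_{i,j=0}^{n-1}$ is circulant if $H_{ij}$ depends only on $j-i$ modulo $n$. $C^{circ}_n(l)$ denotes the set of $n\times n$ circulant complex Hadamard matrices whose entries are all $l$-th roots of unity. Two complex Hadamard matrices are equivalent if one can be obtained from the other by permuting rows, permuting columns, and multiplying individual rows and individual columns by complex numbers of modulus one. *)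

(* complex numbers are modelled by algC (algebraic complex numbers),
   which contains all roots of unity. *)
From HB Require Import structures.
From mathcomp Require Import all_boot all_order all_algebra all_fingroup all_field.
Set Implicit Arguments. Unset Strict Implicit. Unset Printing Implicit Defensive.
Import Order.TTheory GRing.Theory Num.Theory.
Local Open Scope ring_scope.

Definition complex_hadamard (n : nat) (H : 'M[algC]_n) : Prop :=
  (forall i j, `|H i j| = 1) /\
  (forall i k : 'I_n, i != k -> \sum_(j < n) H i j * (H k j)^* = 0).

Definition circulant (n : nat) (H : 'M[algC]_n) : Prop :=
  forall i j k l : 'I_n,
    (j + n - i = l + n - k %[mod n])%N -> H i j = H k l.

Definition entries_roots_of_unity (l n : nat) (H : 'M[algC]_n) : Prop :=
  forall i j, (H i j) ^+ l = 1.

Definition in_Ccirc (n l : nat) (H : 'M[algC]_n) : Prop :=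
  complex_hadamard H /\ circulant H /\ entries_roots_of_unity l H.
Arguments in_Ccirc : clear implicits.

(* Equivalence: K is obtained from H by permuting rows and columns and
   multiplying rows and columns by unimodular scalars. Any composition of
   these operations has this normal form. *)
Definition hadamard_equiv (n : nat) (H K : 'M[algC]_n) : Prop :=
  exists (s t : 'S_n) (a b : 'I_n -> algC),
    (forall i, `|a i| = 1) /\ (forall j, `|b j| = 1) /\
    (forall i j, K i j = a i * b j * H (s i) (t j)).

(* w = e^{2 pi i / n}: n.-root (-1) is the n-th root of -1 of minimal
   nonnegative argument, i.e. e^{i pi / n}; its square is e^{2 pi i / n}. *)
Definition fourier_root (n : nat) : algC := (n.-root (-1)) ^+ 2.

Definition fourier_matrix (n : nat) : 'M[algC]_n :=
  \matrix_(i < n, j < n) fourier_root n ^+ (i * j).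

(* Write w = exp(2 pi i / p) and chi u = w^u for u in F_p.  A circulant H with
   p-th roots of unity as entries has the form H i j = chi (g (j - i)) for a
   function g : F_p -> F_p.  Orthogonality of two rows is a vanishing sum of
   p values of chi; since 1 + X + ... + X^(p-1) is the minimal polynomial of w
   over Q, such a sum takes every value exactly once.  Hence every difference
   map x |-> g (x + a) - g x (a != 0) is a bijection: g is planar.

   Planar functions on F_p are quadratic.  Interpolating g by a polynomial P
   of degree d < p, the double sum of (y - x)^i (g y - g x)^j over F_p^2
   vanishes for 0 < j < p - 1 by planarity, while its binomial expansion in
   the moments \sum_x x^k P(x)^l is computed from the power sums of F_p; for
   d >= 3 a well-chosen (i, j) leaves a single nonzero term.  Affine maps are
   never planar.  Finally, a quadratic phase chi (a d^2 + b d + c) is turned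
   into the Fourier matrix by scaling rows and columns and permuting columns. *)

From HB Require Import structures.
From mathcomp Require Import all_boot all_order all_algebra all_fingroup all_field.
From mathcomp Require Import zify ring.
Import Order.TTheory GRing.Theory Num.Theory.
Local Open Scope ring_scope.

Set Implicit Arguments. Unset Strict Implicit. Unset Printing Implicit Defensive.

(* In a finite additive group, every element is killed by the group order:
   translating the sum of all elements by y adds #|V| copies of y. *)
Lemma mulrn_card (V : finZmodType) (y : V) : y *+ #|V| = 0.
Proof.
have shift : \sum_(x : V) (x + y) = \sum_(x : V) x.
  by rewrite [RHS](reindex_inj (addIr y)).
move: shift; rewrite big_split sumr_const /= => /eqP.
by rewrite -subr_eq0 addrAC subrr add0r => /eqP.
Qed.

Lemma digits_unique d r s k l : (r < d)%N -> (k <= 2 * r)%N ->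
  (k + d * l = r + d * s)%N -> k = r /\ l = s.
Proof.
move=> lt_rd le_k2r eq_kl.
have l_eq : l = s.
  case: (ltngtP l s) => // [lt_ls | lt_sl].
    have : (d * l + d <= d * s)%N by rewrite -mulnSr leq_mul2l lt_ls orbT.
    by move: eq_kl lt_rd le_k2r; lia.
  have : (d * s + d <= d * l)%N by rewrite -mulnSr leq_mul2l lt_sl orbT.
  by move: eq_kl lt_rd; lia.
by split=> //; move: eq_kl; rewrite l_eq; lia.
Qed.

Section FiniteFieldSums.
Variable F : finFieldType.
Local Notation q := #|F|.

Lemma card_gt1 : (1 < q)%N.
Proof. exact: finNzRing_gt1. Qed.

Let q_pos : (0 < q)%N := ltnW card_gt1.

Lemma expf_card_pred (x : F) : x != 0 -> x ^+ q.-1 = 1.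
Proof.
move=> x0; apply: (mulfI x0).
by rewrite -exprS prednK ?expf_card ?mulr1 // (ltn_trans _ card_gt1).
Qed.

Lemma sum_expr_pred : \sum_(x : F) x ^+ q.-1 = -1.
Proof.
have q1_neq0 : (q.-1 == 0)%N = false by have := card_gt1; lia.
rewrite (bigD1 0) //= expr0n q1_neq0 add0r.
rewrite (eq_bigr (fun _ => 1)) => [|x x0]; last by rewrite expf_card_pred.
by apply/eqP; rewrite sumr_const cardC1 -addr_eq0 -mulrSr prednK // mulrn_card.
Qed.

Lemma sum_expr_lt m : (m < q.-1)%N -> \sum_(x : F) x ^+ m = 0.
Proof.
case: m => [_ | m lt_mq]; first by rewrite sumr_const mulrn_card.
have [c c0 cm1] : exists2 c : F, c != 0 & c ^+ m.+1 != 1.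
  apply/exists_inP; rewrite -negb_forall_in; apply/forall_inP => all_roots.
  have: (size (enum [pred x : F | x != 0%R]) <= m.+1)%N.
    apply: (@max_unity_roots _ m.+1) => //; last exact: enum_uniq.
    by apply/allP => x; rewrite mem_enum inE unity_rootE => /all_roots.
  by rewrite -cardE cardC1 leqNgt lt_mq.
have scaled : \sum_(x : F) x ^+ m.+1 = c ^+ m.+1 * \sum_(x : F) x ^+ m.+1.
  rewrite mulr_sumr (reindex_inj (mulfI c0)) /=.
  by apply: eq_bigr => x _; rewrite exprMn.
apply/eqP; move/eqP: scaled; rewrite -subr_eq0 -{1}[\sum_x _]mul1r -mulrBl.
by rewrite mulf_eq0 subr_eq0 eq_sym (negbTE cm1).
Qed.

Lemma sum_horner (Q : {poly F}) : (size Q <= q)%N -> \sum_(x : F) Q.[x] = - Q`_q.-1.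
Proof.
move=> sQ; have wide x : Q.[x] = \sum_(i < q.-1.+1) Q`_i * x ^+ i.
  by rewrite (@horner_coef_wide _ q.-1.+1) ?prednK.
under eq_bigr => x _ do rewrite wide.
rewrite exchange_big big_ord_recr /= -mulr_sumr sum_expr_pred mulrN1.
rewrite big1 ?add0r // => i _.
by rewrite -mulr_sumr sum_expr_lt ?mulr0.
Qed.

(* Every function F -> F is a polynomial function of degree < q
   (Lagrange interpolation, using 1 - (x - z)^(q-1) = [x == z]). *)
Lemma interpolation (g : F -> F) :
  exists P : {poly F}, (size P <= q)%N /\ forall x, P.[x] = g x.
Proof.
have q1_neq0 : (q.-1 != 0)%N by rewrite -lt0n -ltnS prednK // card_gt1.
exists (\sum_(z : F) g z *: (1 - ('X - z%:P) ^+ q.-1)); split.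
  apply: leq_trans (size_sum _ _ _) _; apply/bigmax_leqP => z _.
  apply: leq_trans (size_scale_leq _ _) _.
  apply: leq_trans (size_polyD _ _) _; rewrite size_polyN size_exp_XsubC size_poly1.
  by rewrite prednK // geq_max q_pos leqnn.
move=> x; rewrite horner_sum (bigD1 x) //= big1 ?addr0 => [|z zx].
  by rewrite hornerZ !hornerE subrr expr0n (negbTE q1_neq0) subr0 mulr1.
by rewrite hornerZ !hornerE expf_card_pred ?subrr ?mulr0 // subr_eq0 eq_sym.
Qed.

Definition moment (g : F -> F) (k l : nat) : F := \sum_(x : F) x ^+ k * g x ^+ l.

(* For a polynomial of degree d, the moment (k, l) is the sum of a polynomial
   of degree k + d * l, hence vanishes below degree q - 1. *)
Lemma moment_horner (P : {poly F}) d k l : size P = d.+1 -> (k + d * l < q)%N ->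
  moment (horner P) k l =
  if (k + d * l == q.-1)%N then - lead_coef P ^+ l else 0.
Proof.
move=> sP lt_deg.
have P0 : P != 0 by rewrite -size_poly_eq0 sP.
have sPl : size (P ^+ l) = (d * l).+1.
  by rewrite -[d]/(d.+1.-1) -sP -size_exp prednK // lt0n size_poly_eq0 expf_neq0.
pose Q := P ^+ l * 'X^k.
have sQ : size Q = (k + d * l).+1 by rewrite size_mulXn ?expf_neq0 // sPl addnS addnC.
rewrite /moment (eq_bigr (fun x => Q.[x])) => [|x _]; last first.
  by rewrite hornerM hornerXn horner_exp mulrC.
rewrite sum_horner ?sQ //; case: eqP => [deg_eq | deg_ne].
  have -> : q.-1 = (size Q).-1 by rewrite sQ deg_eq.
  by rewrite -/(lead_coef Q) lead_coefM lead_coefXn mulr1 lead_coef_exp.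
by rewrite nth_default ?oppr0 // sQ; move: lt_deg deg_ne; lia.
Qed.

Lemma moment_horner_lt (P : {poly F}) d k l : size P = d.+1 -> (k + d * l < q.-1)%N ->
  moment (horner P) k l = 0.
Proof.
move=> sP lt_deg; rewrite (moment_horner sP) ?ifN //; move: lt_deg; lia.
Qed.

Lemma moment_horner_top (P : {poly F}) d k l : size P = d.+1 -> (k + d * l)%N = q.-1 ->
  moment (horner P) k l = - lead_coef P ^+ l.
Proof.
by move=> sP deg_eq; rewrite (moment_horner sP) deg_eq ?eqxx // prednK.
Qed.

(* If q - 1 = s d + r with r < d, then in the product of moments of indices
   (2 r - k, 2 s - l) and (k, l) the two degrees add up to 2 (q - 1), so one of
   them is below q - 1 unless (k, l) = (r, s). *)
Lemma moment_cross_vanish (P : {poly F}) d r s k l :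
  size P = d.+1 -> q.-1 = (s * d + r)%N -> (r < d)%N ->
  (k <= 2 * r)%N -> (l <= 2 * s)%N -> (k != r) || (l != s) ->
  moment (horner P) (2 * r - k) (2 * s - l) * moment (horner P) k l = 0.
Proof.
move=> sP q1_eq lt_rd le_k le_l kl_ne.
have d_split : (d * (2 * s - l) + d * l = 2 * (s * d))%N.
  by rewrite -mulnDr subnK // mulnC -mulnA.
have [lt_kl | ge_kl] := ltnP (k + d * l) q.-1.
  by rewrite (moment_horner_lt sP lt_kl) mulr0.
have [lt_dual | ge_dual] := ltnP (2 * r - k + d * (2 * s - l)) q.-1.
  by rewrite (moment_horner_lt sP lt_dual) mul0r.
have [k_eq l_eq] : k = r /\ l = s.
  by apply: (digits_unique lt_rd) => //; move: d_split q1_eq ge_kl ge_dual le_k; lia.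
by rewrite k_eq l_eq !eqxx in kl_ne.
Qed.

Definition planar (g : F -> F) :=
  forall a : F, a != 0 -> injective (fun x => g (x + a) - g x).

(* Substituting y = x + a, the double sum over pairs (x, y) of
   (y - x)^i (g y - g x)^j splits along a; for a != 0 the inner sum is the
   power sum \sum_b b^j by planarity, and for a = 0 the term is 0. *)
Lemma planar_double_sum g i j : planar g -> (0 < j < q.-1)%N ->
  \sum_(x : F) \sum_(y : F) (y - x) ^+ i * (g y - g x) ^+ j = 0.
Proof.
move=> planar_g /andP[j_pos lt_jq].
under eq_bigr => x _ do rewrite (reindex_inj (addIr x)) /=.
rewrite exchange_big /=; apply: big1 => a _.
under eq_bigr => x _ do rewrite addrK (addrC a x).
rewrite -mulr_sumr; have [-> | a0] := eqVneq a 0.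
  by rewrite big1 ?mulr0 // => x _; rewrite addr0 subrr expr0n eqn0Ngt j_pos.
suff -> : \sum_(x : F) (g (x + a) - g x) ^+ j = \sum_(b : F) b ^+ j.
  by rewrite sum_expr_lt ?mulr0.
by rewrite [RHS](reindex_inj (planar_g a a0)).
Qed.

Lemma double_sum_moments g i j :
  \sum_(x : F) \sum_(y : F) (y - x) ^+ i * (g y - g x) ^+ j =
  \sum_(k < i.+1) \sum_(l < j.+1) ('C(i, k) * 'C(j, l))%:R * (-1) ^+ (i - k + (j - l)) *
     moment g (i - k) (j - l) * moment g k l.
Proof.
under eq_bigr => x _ do under eq_bigr => y _ do
  rewrite [y - x]addrC [g y - g x]addrC !exprDn big_distrlr.
under eq_bigr => x _ do rewrite exchange_big.
rewrite exchange_big; apply: eq_bigr => k _.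
under eq_bigr => x _ do rewrite exchange_big.
rewrite exchange_big; apply: eq_bigr => l _.
rewrite /moment -mulrA big_distrlr mulr_sumr; apply: eq_bigr => x _.
rewrite mulr_sumr; apply: eq_bigr => y _.
rewrite /= -[_ *+ 'C(i, k)]mulr_natl -[_ *+ 'C(j, l)]mulr_natl (exprNn x) (exprNn (g x)) natrM exprD.
ring.
Qed.

(* Affine maps are not planar: their difference maps are constant. *)
Lemma affine_not_planar (P : {poly F}) :
  (size P <= 2)%N -> ~ planar (horner P).
Proof.
move=> sP planar_P.
have affine x : P.[x] = P`_0 + P`_1 * x.
  by rewrite (@horner_coef_wide _ 2) // !big_ord_recr big_ord0 /= expr0 expr1; ring.
have zero_one : (0 : F) = 1 by apply: (planar_P 1 (oner_neq0 _)); rewrite /= !affine; ring.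
by move/eqP: zero_one; rewrite eq_sym oner_eq0.
Qed.

End FiniteFieldSums.

Section PrimeField.
Variable p : nat.
Hypothesis p_pr : prime p.
Local Notation F := 'F_p.

Lemma card_F : #|F| = p.
Proof. exact: card_Fp. Qed.

Lemma binomial_Fp_neq0 n m : (m <= n)%N -> (n < p)%N -> 'C(n, m)%:R != 0 :> F.
Proof.
move=> le_mn lt_np; rewrite -(dvdn_pcharf (pchar_Fp p_pr)).
have fact_ndvd : ~~ (p %| n`!)%N.
  elim: n lt_np {le_mn} => [|n IHn] lt_np; first by rewrite fact0 dvdn1 gtn_eqF ?prime_gt1.
  by rewrite factS Euclid_dvdM // negb_or gtnNdvd // IHn // ltnW.
by apply: contra fact_ndvd => dvd_bin; rewrite -(bin_fact le_mn) dvdn_mulr.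
Qed.

(* Write p - 1 = s d + r
   with r < d and expand the vanishing double sum for (i, j) = (2 r, 2 s):
   each product of moments is zero unless both degrees equal p - 1, which
   only happens for (k, l) = (r, s), whose term is nonzero. *)
Lemma planar_degree_le2 (P : {poly F}) : (size P <= p)%N -> planar (horner P) ->
  (size P <= 3)%N.
Proof.
move=> le_sP_p planar_P; rewrite leqNgt; apply/negP => gt_sP3.
have [d sP] : exists d, size P = d.+1 by exists (size P).-1; move: gt_sP3; lia.
have p_gt1 := prime_gt1 p_pr.
have le_dp : (d < p)%N by move: le_sP_p; rewrite sP.
have d_ge3 : (3 <= d)%N by move: gt_sP3; rewrite sP.
pose s := (p.-1 %/ d)%N; pose r := (p.-1 %% d)%N.
have p1_eq : p.-1 = (s * d + r)%N by apply: divn_eq.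
have lt_rd : (r < d)%N by rewrite ltn_pmod //; move: d_ge3; lia.
have s_pos : (0 < s)%N by rewrite divn_gt0 //; move: d_ge3 le_dp; lia.
have le_3s : (3 * s <= s * d)%N by rewrite mulnC leq_mul2l d_ge3 orbT.
have le_d_sd : (d <= s * d)%N by rewrite leq_pmull.
pose M := moment (horner P).
have M_top : M r s = - lead_coef P ^+ s.
  by rewrite /M (moment_horner_top sP) // card_F; move: p1_eq; lia.
have j_range : (0 < 2 * s < #|F|.-1)%N by rewrite card_F; move: s_pos le_3s p1_eq; lia.
have := planar_double_sum (2 * r)%N planar_P j_range.
rewrite double_sum_moments -/M; apply/eqP.
have lt_r : (r < (2 * r).+1)%N by lia.
have lt_s : (s < (2 * s).+1)%N by lia.
rewrite (bigD1 (Ordinal lt_r)) //= (bigD1 (Ordinal lt_s)) //= !big1 ?addr0.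
- have -> : (2 * r - r = r)%N by lia.
  have -> : (2 * s - s = s)%N by lia.
  have lead_neq0 : lead_coef P != 0 by rewrite lead_coef_eq0 -size_poly_eq0 sP.
  rewrite M_top natrM !mulf_neq0 ?signr_eq0 ?oppr_eq0 ?expf_neq0 //;
    by apply: binomial_Fp_neq0; move: p1_eq le_3s le_d_sd lt_rd p_gt1; lia.
- move=> [k /= lt_k] ne_k; apply: big1 => -[l /= lt_l] _.
  rewrite -mulrA (moment_cross_vanish sP) ?card_F ?mulr0 //; try lia.
  by move: ne_k; rewrite -val_eqE /= => ->.
- move=> [l /= lt_l] ne_l; rewrite -mulrA (moment_cross_vanish sP) ?card_F ?mulr0 //; try lia.
  by move: ne_l; rewrite -val_eqE /= => ->; rewrite orbT.
Qed.

Lemma planar_quadratic (g : F -> F) : planar g ->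
  (2 < p)%N /\ exists a b c : F, a != 0 /\ forall x, g x = a * x ^+ 2 + b * x + c.
Proof.
move=> planar_g; have [P [sP Pg]] := interpolation g.
rewrite card_F in sP.
have planar_P : planar (horner P) by move=> a a0 x y /=; rewrite !Pg; apply: planar_g.
have le_sP3 := planar_degree_le2 sP planar_P.
have [lt_sP3 | ge_sP3] := ltnP (size P) 3; first by case: (affine_not_planar lt_sP3 planar_P).
have sP3 : size P = 3 by apply/eqP; rewrite eqn_leq le_sP3.
split; first by rewrite sP3 in sP.
exists P`_2, P`_1, P`_0; split.
  by have := lead_coef_eq0 P; rewrite /lead_coef sP3 => ->; rewrite -size_poly_eq0 sP3.
move=> x; rewrite -Pg (@horner_coef_wide _ 3) ?sP3 //.
by rewrite !big_ord_recr big_ord0 /= expr0 expr1; ring.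
Qed.

End PrimeField.

(* For prime p, w = (p.-root (-1))^2 is a primitive p-th root of unity:
   w^p = 1, and w = 1 would force p.-root (-1) = 1 or -1, which is excluded
   by the sign conventions of the principal root. *)
Lemma fourier_root_prim p : prime p -> p.-primitive_root (fourier_root p).
Proof.
move=> p_pr; have p_gt1 := prime_gt1 p_pr; have p_pos := ltnW p_gt1.
have r_pow : p.-root (-1 : algC) ^+ p = -1 by apply: rootCK.
have wp : fourier_root p ^+ p = 1 by rewrite exprAC r_pow sqrrN expr1n.
have w_neq1 : fourier_root p != 1.
  rewrite sqrf_eq1 negb_or; apply/andP; split; apply/eqP => r_eq.
    by have := rootC_ge0 (-1 : algC) p_pos; rewrite r_eq ler01 oppr_ge0 ler10.
  by have := rootC_lt0 (-1 : algC) p_gt1; rewrite r_eq ltrN10.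
have [m m_prim m_dvd] := prim_order_exists p_pos wp.
case/primeP: p_pr => _ /(_ m m_dvd) /orP[/eqP m1 | /eqP m_p]; last by rewrite m_p in m_prim.
by rewrite -(prim_expr_order m_prim) m1 expr1 eqxx in w_neq1.
Qed.

(* The minimal polynomial over Q of a primitive p-th root of unity, p prime,
   is 1 + X + ... + X^(p-1): a rational polynomial vanishes at w iff it is a
   multiple of this one. *)
Lemma root_prime_root_unity p (w : algC) (Q : {poly rat}) : prime p -> p.-primitive_root w ->
  root (map_poly ratr Q) w = (\poly_(i < p) (1 : rat) %| Q).
Proof.
move=> p_pr w_prim; have p_gt1 := prime_gt1 p_pr; have p_pos := ltnW p_gt1.
have [m [Dm m_monic] m_root] := minCpolyP w.
pose U : {poly rat} := \poly_(i < p) 1.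
suff m_eq : m = U by rewrite m_root m_eq.
have sm : size m = p.
  have := size_cyclotomic w p.
  by rewrite -(minCpoly_cyclotomic w_prim) Dm size_map_poly totient_prime // prednK.
have sU : size U = p by rewrite size_poly_eq // oner_neq0.
have U_monic : U \is monic.
  by rewrite monicE /lead_coef sU coef_poly ifT // -subn1 ltn_subrL p_pos.
have U_root : root (map_poly ratr U) w.
  have w_neq1 : w != 1.
    by apply/eqP => w1; have := prim_order_dvd w_prim 1; rewrite expr1 w1 eqxx dvdn1 gtn_eqF.
  have /eqP := prim_expr_order w_prim; rewrite -subr_eq0 subrX1 mulf_eq0 subr_eq0.
  rewrite (negbTE w_neq1) /= => /eqP sum0.
  rewrite /root (@horner_coef_wide _ p) ?size_map_poly ?sU //; apply/eqP.
  rewrite -[RHS]sum0; apply: eq_bigr => i _.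
  by rewrite coef_map coef_poly ltn_ord /= rmorph1 mul1r.
apply/eqP; rewrite -eqp_monic // -dvdp_size_eqp ?sm ?sU //.
by rewrite -m_root.
Qed.

Lemma ones_poly_eq p (Q : {poly rat}) : (0 < p)%N -> (size Q <= p)%N ->
  Q.[1] = p%:R -> \poly_(i < p) 1 %| Q -> Q = \poly_(i < p) 1.
Proof.
move=> p_pos sQ Q1; set U := \poly_(i < p) 1 => /dvdpP [r Qr].
have sU : size U = p by rewrite size_poly_eq // oner_neq0.
have U1 : U.[1] = p%:R.
  rewrite horner_poly (eq_bigr (fun _ => 1)) ?sumr_const ?card_ord // => i _.
  by rewrite expr1n mulr1.
have p_neq0 : p%:R != 0 :> rat by rewrite pnatr_eq0 -lt0n.
have r_neq0 : r != 0 by apply: contraNneq p_neq0 => r0; rewrite -Q1 Qr r0 mul0r horner0.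
have sr : size r = 1%N.
  have U_neq0 : U != 0 by rewrite -size_poly_eq0 sU -lt0n.
  have r_pos : (0 < size r)%N by rewrite size_poly_gt0.
  by move: sQ r_pos; rewrite Qr size_mul // sU -subn1; move: (size r) => k; lia.
have r_const : r = (r`_0)%:P by rewrite [r]size1_polyC ?sr // coefC eqxx.
suff r01 : r`_0 = 1 by rewrite Qr r_const r01 mul1r.
have : Q.[1] = r`_0 * U.[1] by rewrite Qr {1}r_const hornerM hornerC.
by rewrite Q1 U1 -{1}[p%:R]mul1r => /(mulIf p_neq0).
Qed.

Section FourierCharacter.
Variable p : nat.
Hypothesis p_pr : prime p.
Local Notation F := 'F_p.
Local Notation w := (fourier_root p).

Let w_prim : p.-primitive_root w := fourier_root_prim p_pr.

(* Row and column indices 'I_p are identified with the elements of F_p. *)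
Lemma Fp_val_lt (u : F) : (u < p)%N.
Proof. by apply: leq_trans (ltn_ord u) _; rewrite Fp_cast. Qed.

Definition toF (j : 'I_p) : F := (val j)%:R.
Definition ofF (u : F) : 'I_p := Ordinal (Fp_val_lt u).

Lemma toFK : cancel ofF toF.
Proof. by move=> u; rewrite /toF /= natr_Zp. Qed.

Lemma ofFK : cancel toF ofF.
Proof.
by move=> j; apply: val_inj; rewrite /= /toF val_Fp_nat // modn_small ?ltn_ord.
Qed.

Definition chi (u : F) : algC := w ^+ u.

Lemma chi_nat n : chi n%:R = w ^+ n.
Proof. by rewrite /chi val_Fp_nat // (prim_expr_mod w_prim). Qed.

Lemma chiD u v : chi (u + v) = chi u * chi v.
Proof. by rewrite -[u in LHS]natr_Zp -[v in LHS]natr_Zp -natrD chi_nat exprD. Qed.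

Lemma chi_norm u : `|chi u| = 1.
Proof.
apply/eqP; rewrite -(pexpr_eq1 (prime_gt0 p_pr)) ?normr_ge0 //.
by rewrite -normrX /chi exprAC (prim_expr_order w_prim) expr1n normr1.
Qed.

Lemma chi_conj u : (chi u)^* = chi (- u).
Proof.
have chi_neq0 : chi u != 0 by rewrite -normr_eq0 chi_norm oner_neq0.
apply: (mulfI chi_neq0); rewrite -chiD subrr -[0]/(0%:R) chi_nat expr0.
by rewrite -normCK chi_norm expr1n.
Qed.

(* A vanishing sum of p values of chi takes every value exactly once: the
   polynomial \sum_t X^(f t) vanishes at w and takes the value p at 1, hence
   equals 1 + X + ... + X^(p-1), so no exponent repeats. *)
Lemma chi_sum_injective (T : finType) (f : T -> F) :
  #|T| = p -> \sum_(t : T) chi (f t) = 0 -> injective f.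
Proof.
move=> card_T sum0; pose Q : {poly rat} := \sum_(t : T) 'X^(f t).
have Q_eq : Q = \poly_(i < p) 1.
  apply: ones_poly_eq (prime_gt0 p_pr) _ _ _.
  - apply: leq_trans (size_sum _ _ _) _; apply/bigmax_leqP => t _.
    by rewrite size_polyXn Fp_val_lt.
  - rewrite horner_sum (eq_bigr (fun _ => 1)) ?sumr_const ?card_T // => t _.
    by rewrite hornerXn expr1n.
  rewrite -(root_prime_root_unity _ p_pr w_prim); apply/eqP.
  rewrite rmorph_sum horner_sum -[RHS]sum0; apply: eq_bigr => t _.
  by rewrite rmorphXn /= map_polyX hornerXn.
move=> t1 t2 f_eq; apply/eqP/negPn/negP => t_neq.
have := congr1 (fun P : {poly rat} => P`_(f t1)) Q_eq.
rewrite /= coef_poly Fp_val_lt /Q coef_sum (bigD1 t1) //= (bigD1 t2) ?(eq_sym t2) //=.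
rewrite ?coefXn f_eq eqxx; set rest := \sum_(t | _) _ => sum_eq.
have rest_ge0 : 0 <= rest by apply: sumr_ge0 => t _; rewrite coefXn ler0n.
have : 1 + rest = 0 by apply: (addrI 1); rewrite addr0.
by move/eqP; rewrite gt_eqF // ltr_pwDl.
Qed.

End FourierCharacter.

Section CirculantHadamard.
Variable p : nat.
Hypothesis p_pr : prime p.
Local Notation F := 'F_p.

Lemma circulant_chi (H : 'M[algC]_p) :
  circulant H -> entries_roots_of_unity p H ->
  exists g : F -> F, forall i j, H i j = chi (g (toF j - toF i)).
Proof.
move=> circH rootsH; pose i0 := ofF p_pr 0.
have H_diff i j : H i j = H i0 (ofF p_pr (toF j - toF i)).
  have le_ijp : (i <= j + p)%N by rewrite ltnW // ltn_addl.
  have diff : toF j - toF i = (j + p - i)%:R :> F.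
    by rewrite /toF natrB // natrD pchar_Fp_0 // addr0.
  by apply: circH; rewrite diff /= val_Fp_nat // subn0 modnDr modn_mod.
pose expo u := sval (prim_rootP (fourier_root_prim p_pr) (rootsH i0 (ofF p_pr u))).
exists (fun u => (expo u)%:R) => i j.
by rewrite chi_nat // H_diff; apply: (svalP (prim_rootP _ _)).
Qed.

(* Orthogonality of row 0 with row a says that \sum_u chi (g u - g (u - a))
   vanishes, so the difference map of g at a is injective: g is planar. *)
Lemma hadamard_chi_planar (H : 'M[algC]_p) (g : F -> F) : complex_hadamard H ->
  (forall i j, H i j = chi (g (toF j - toF i))) -> planar g.
Proof.
move=> [_ orthH] Hg a a0.
have rows_neq : ofF p_pr 0 != ofF p_pr a.
  by apply: contra_neq a0 => /(congr1 (@toF p)); rewrite !toFK.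
have diff_sum : \sum_(u : F) chi (g u - g (u - a)) = 0.
  rewrite -[RHS](orthH _ _ rows_neq) (reindex (ofF p_pr)) /=; last first.
    by exists (@toF p) => [u _ | j _]; rewrite ?toFK ?ofFK.
  by apply: eq_bigr => u _; rewrite !Hg !toFK subr0 chi_conj // -chiD.
have diff_inj := chi_sum_injective p_pr (card_F p_pr) diff_sum.
by move=> x y /= eq_xy; apply: (addIr a); apply: diff_inj; rewrite /= !addrK.
Qed.

(* A quadratic phase a d^2 + b d + c in the difference d = j - i, a != 0, gives
   the Fourier matrix after scaling rows and columns and substituting
   j -> tau j with tau = -1 / (2 a): the cross term -2 a tau i j becomes i j. *)
Lemma quadratic_chi_fourier (H : 'M[algC]_p) (a b c : F) : (2 < p)%N -> a != 0 ->
  (forall i j, H i j = chi (a * (toF j - toF i) ^+ 2 + b * (toF j - toF i) + c)) ->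
  hadamard_equiv H (fourier_matrix p).
Proof.
move=> p_gt2 a0 Hq.
have two_neq0 : 2%:R != 0 :> F.
  rewrite -(dvdn_pcharf (pchar_Fp p_pr)); apply: contraL p_gt2 => /dvdn_leq.
  by rewrite -leqNgt; apply.
pose tau : F := - (2%:R * a)^-1.
have tau0 : tau != 0 by rewrite oppr_eq0 invr_eq0 mulf_neq0.
have cross : 2%:R * a * tau = -1 by rewrite mulrN mulfV ?mulf_neq0.
have tau_inj : injective (fun j => ofF p_pr (tau * toF j)).
  move=> j1 j2 /(congr1 (@toF p)); rewrite !toFK => /(mulfI tau0) /(congr1 (ofF p_pr)).
  by rewrite !ofFK.
exists 1%g, (perm tau_inj), (fun i => chi (- (a * toF i ^+ 2 - b * toF i + c))),
  (fun j => chi (- (a * tau ^+ 2 * toF j ^+ 2 + b * tau * toF j))).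
split=> [i | ]; first exact: chi_norm.
split=> [j | i j]; first exact: chi_norm.
rewrite perm1 permE Hq toFK -!chiD // /fourier_matrix mxE -chi_nat // natrM.
congr chi; rewrite -[toF i * toF j]mul1r -[1]opprK -cross /toF.
by ring.
Qed.

End CirculantHadamard.

Unset Implicit Arguments.

Theorem theorem1p2 (p : nat) (H : 'M[algC]_p) :
  prime p -> in_Ccirc p p H -> hadamard_equiv H (fourier_matrix p).
Proof.
move=> p_pr [hadH [circH rootsH]].
have [g Hg] := circulant_chi p_pr circH rootsH.
have g_planar := hadamard_chi_planar p_pr hadH Hg.
have [p_gt2 [a [b [c [a0 g_quad]]]]] := planar_quadratic p_pr g_planar.
by apply: (quadratic_chi_fourier p_pr p_gt2 a0) => i j; rewrite Hg g_quad.
Qed.
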